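(* Let $\kappa<\lambda$ be infinite regular cardinals. Then $\mathbb{P}(\lambda,\kappa)$ is $\kappa$-directed closed.
   Context: For a set $C$ of ordinals, $C'=\{\alpha\in C\mid\sup(C\cap\alpha)=\alpha\}$. $\mathbb{P}(\lambda,\kappa)$ consists of conditions $p=\langle C^p_{\alpha,i}\mid\alpha\le\gamma^p,\ i(\alpha)^p\le i<\kappa\rangle$ such that: (1) $\gamma^p<\lambda$ is a limit ordinal and for all limit $\alpha\le\gamma^p$, $i(\alpha)^p<\kappa$; (2) for limit $\alpha\le\gamma^p$ and $i(\alpha)^p\le i<\kappa$, $C^p_{\alpha,i}$ is club in $\alpha$; (3) for limit $\alpha\le\gamma^p$ and $i(\alpha)^p\le i<j<\kappa$, $C^p_{\alpha,i}\subseteq C^p_{\alpha,j}$; (4) for limit $\alpha<\beta\le\gamma^p$ and $i(\beta)^p\le i<\kappa$, if $\alpha\in(C^p_{\beta,i})'$ then $i(\alpha)^p\le i$ and $C^p_{\beta,i}\cap\alpha=C^p_{\alpha,i}$; (5) for limit $\alpha<\beta\le\gamma^p$ there is $i<\kappa$ with $\alpha\in(C^p_{\beta,i})'$. The order is end-extension: $q\le p$ iff $\gamma^q\ge\gamma^p$ and for all limit $\alpha\le\gamma^p$, $i(\alpha)^q=i(\alpha)^p$ and $C^q_{\alpha,i}=C^p_{\alpha,i}$ for $i(\alpha)^p\le i<\kappa$. A poset is $\kappa$-directed closed if every directed subset of size $<\kappa$ has a lower bound. *)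

(* Ordinals below a cardinal are modelled as elements of a
   well-ordered type. *)
From Stdlib Require Import Arith.

Section Basics.
Variable T : Type.
Variable lt : T -> T -> Prop.

Definition le (x y : T) : Prop := lt x y \/ x = y.

Definition IsWellOrder : Prop :=
  (forall x, ~ lt x x) /\
  (forall x y z, lt x y -> lt y z -> lt x z) /\
  (forall x y, lt x y \/ x = y \/ lt y x) /\
  well_founded lt.

Definition isLimit (a : T) : Prop :=
  (exists b, lt b a) /\ (forall b, lt b a -> exists d, lt b d /\ lt d a).

Definition inDerived (C : T -> Prop) (a : T) : Prop :=
  C a /\ (forall b, lt b a -> exists d, C d /\ lt b d /\ lt d a).

Definition isClubIn (C : T -> Prop) (a : T) : Prop :=
  (forall x, C x -> lt x a) /\
  (forall b, lt b a -> exists d, C d /\ lt b d /\ lt d a) /\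
  (forall d, lt d a -> isLimit d ->
     (forall b, lt b d -> exists e, C e /\ lt b e /\ lt e d) -> C d).
End Basics.

Definition inj_into (A B : Type) : Prop :=
  exists f : A -> B, forall x y, f x = f y -> x = y.
Definition card_lt (A B : Type) : Prop := inj_into A B /\ ~ inj_into B A.

Definition InfRegCard (T : Type) (lt : T -> T -> Prop) : Prop :=
  IsWellOrder T lt /\
  (* initial ordinal: every proper initial segment has smaller cardinality *)
  (forall x : T, ~ inj_into T {y : T | lt y x}) /\
  inj_into nat T /\
  (* regular: every cofinal subset has full cardinality *)
  (forall A : T -> Prop, (forall x, exists y, A y /\ le T lt x y) ->
     inj_into T {y : T | A y}).

(* A (potential) condition: gamma^p, alpha |-> i(alpha)^p, and C^p_{alpha,i}.
   Values outside the relevant domain are irrelevant junk. *)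
Record Cond (L K : Type) : Type := mkCond {
  gam : L;
  iof : L -> K;
  clubs : L -> K -> L -> Prop
}.
Arguments gam {L K}.
Arguments iof {L K}.
Arguments clubs {L K}.

Section Forcing.
Variables L K : Type.
Variable ltL : L -> L -> Prop.
Variable ltK : K -> K -> Prop.

Definition IsCond (p : Cond L K) : Prop :=
  isLimit L ltL (gam p) /\
  (forall a, isLimit L ltL a -> le L ltL a (gam p) ->
     forall i, le K ltK (iof p a) i -> isClubIn L ltL (clubs p a i) a) /\
  (forall a, isLimit L ltL a -> le L ltL a (gam p) ->
     forall i j, le K ltK (iof p a) i -> ltK i j ->
       forall x, clubs p a i x -> clubs p a j x) /\
  (* (4) *)
  (forall a b, isLimit L ltL a -> isLimit L ltL b -> ltL a b -> le L ltL b (gam p) ->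
     forall i, le K ltK (iof p b) i -> inDerived L ltL (clubs p b i) a ->
       le K ltK (iof p a) i /\
       (forall x, (clubs p b i x /\ ltL x a) <-> clubs p a i x)) /\
  (* (5) *)
  (forall a b, isLimit L ltL a -> isLimit L ltL b -> ltL a b -> le L ltL b (gam p) ->
     exists i, le K ltK (iof p b) i /\ inDerived L ltL (clubs p b i) a).

(* q <= p : q end-extends p *)
Definition extends (q p : Cond L K) : Prop :=
  le L ltL (gam p) (gam q) /\
  (forall a, isLimit L ltL a -> le L ltL a (gam p) ->
     iof q a = iof p a /\
     (forall i, le K ltK (iof p a) i ->
        forall x, clubs q a i x <-> clubs p a i x)).
End Forcing.

Definition kappa_directed_closed (P : Type) (isP : P -> Prop)
    (leP : P -> P -> Prop) (Kap : Type) : Prop :=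
  forall S : P -> Prop,
    (forall p, S p -> isP p) ->
    (forall p1 p2, S p1 -> S p2 -> exists r, S r /\ leP r p1 /\ leP r p2) ->
    card_lt {p : P | S p} Kap ->
    exists q, isP q /\ forall p, S p -> leP q p.

From Stdlib Require Import Classical ClassicalEpsilon ProofIrrelevance.

(* Let S be a directed family of fewer than kappa conditions.  Any two members
   of S agree on the levels where both are defined, so if the heights gamma^p
   have a maximum, the member attaining it is a lower bound.  Otherwise, since
   lambda is regular and |S| < kappa < lambda, g = sup gamma^p is a limit below
   lambda; below g the members of S glue together, and at g we put
   C_{g,i} = U_p C^p_{gamma^p,i} for i >= i*.  Here i* bounds every i(gamma^p)^p
   and, for gamma^p < gamma^p', an index witnessing clause (5) of p' at gamma^p;
   it exists because kappa is regular.  Clause (4) of p' then makes the clubs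
   C^p_{gamma^p,i} initial segments of one another, so their union is club in g
   and is coherent with everything below.  For empty S any condition will do,
   and one exists because lambda > omega. *)

Lemma le_refl {T} {lt : T -> T -> Prop} (x : T) : le T lt x x.
Proof. now right. Qed.

Lemma lt_le {T} {lt : T -> T -> Prop} (x y : T) : lt x y -> le T lt x y.
Proof. now left. Qed.

Lemma inj_into_trans (A B C : Type) : inj_into A B -> inj_into B C -> inj_into A C.
Proof.
  intros [f Hf] [h Hh]. exists (fun x => h (f x)). intros x y E. exact (Hf _ _ (Hh _ _ E)).
Qed.

Section WellOrder.
Context {T : Type} {lt : T -> T -> Prop} (W : IsWellOrder T lt).

Lemma lt_irrefl (x : T) : ~ lt x x.
Proof. exact (proj1 W x). Qed.

Lemma lt_trans (x y z : T) : lt x y -> lt y z -> lt x z.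
Proof. exact (proj1 (proj2 W) x y z). Qed.

Lemma lt_trichotomy (x y : T) : lt x y \/ x = y \/ lt y x.
Proof. exact (proj1 (proj2 (proj2 W)) x y). Qed.

Lemma le_trans (x y z : T) : le T lt x y -> le T lt y z -> le T lt x z.
Proof.
  intros [Hxy| <-] [Hyz| <-]; [left; exact (lt_trans _ _ _ Hxy Hyz)|now left|now left|now right].
Qed.

Lemma le_lt_trans (x y z : T) : le T lt x y -> lt y z -> lt x z.
Proof. intros [Hxy| <-] Hyz; [exact (lt_trans _ _ _ Hxy Hyz)|exact Hyz]. Qed.

Lemma lt_le_trans (x y z : T) : lt x y -> le T lt y z -> lt x z.
Proof. intros Hxy [Hyz| <-]; [exact (lt_trans _ _ _ Hxy Hyz)|exact Hxy]. Qed.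

Lemma le_not_lt (x y : T) : le T lt x y -> ~ lt y x.
Proof. intros Hxy Hyx. exact (lt_irrefl _ (le_lt_trans _ _ _ Hxy Hyx)). Qed.

Lemma not_lt_le (x y : T) : ~ lt y x -> le T lt x y.
Proof.
  intros Hyx. destruct (lt_trichotomy x y) as [Hxy|[<-|Hyx']]; [now left|now right|contradiction].
Qed.

Lemma least_element (P : T -> Prop) (x : T) :
  P x -> exists m, P m /\ forall y, P y -> le T lt m y.
Proof.
  induction x as [x IH] using (well_founded_ind (proj2 (proj2 (proj2 W)))). intros Px.
  destruct (classic (exists y, P y /\ lt y x)) as [[y [Py Hyx]]|Hmin].
  - exact (IH y Hyx Py).
  - exists x. split; [exact Px|]. intros y Py. apply not_lt_le. intros Hyx. apply Hmin; eauto.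
Qed.

Lemma exists_upper_bound2 (x y : T) : exists m, le T lt x m /\ le T lt y m.
Proof.
  destruct (lt_trichotomy x y) as [Hxy|[<-|Hyx]].
  - exists y. split; [now left|now right].
  - exists x. split; now right.
  - exists x. split; [now right|now left].
Qed.

End WellOrder.

Section RegularCardinal.
Context {T : Type} {lt : T -> T -> Prop} (HT : InfRegCard T lt).

Let W : IsWellOrder T lt := proj1 HT.

Lemma regular_bounded {I : Type} (f : I -> T) :
  ~ inj_into T I -> exists B, forall i, le T lt (f i) B.
Proof.
  intros NI. apply NNPP. intros Nbound.
  assert (Hcof : forall x, exists y, (exists i, f i = y) /\ le T lt x y).
  { intros x. apply NNPP. intros N. apply Nbound. exists x. intros i.
    apply (not_lt_le W). intros Hlt. apply N. exists (f i). split; [eauto|now left]. }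
  destruct (proj2 (proj2 (proj2 HT)) _ Hcof) as [h Hh].
  destruct (choice (fun (y : {y | exists i, f i = y}) i => f i = proj1_sig y)) as [idx Hidx].
  { intros [y Hy]. exact Hy. }
  apply NI. exists (fun x => idx (h x)). intros x y E. apply Hh.
  apply (eq_sig_hprop (fun _ => proof_irrelevance _)).
  now rewrite <- Hidx, E, Hidx.
Qed.

Lemma regular_bounded2 {I : Type} (f : I -> I -> T) :
  ~ inj_into T I -> exists B, forall i j, le T lt (f i j) B.
Proof.
  intros NI.
  destruct (choice (fun i B => forall j, le T lt (f i j) B)) as [row Hrow].
  { intros i. exact (regular_bounded (f i) NI). }
  destruct (regular_bounded row NI) as [B HB].
  exists B. intros i j. exact (le_trans W _ _ _ (Hrow i j) (HB i)).
Qed.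

Lemma no_greatest (x : T) : exists y, lt x y.
Proof.
  apply NNPP. intros Hmax.
  assert (Hcof : forall z, exists y, y = x /\ le T lt z y).
  { intros z. exists x. split; [reflexivity|]. apply (not_lt_le W). intros Hxz. apply Hmax; eauto. }
  destruct (proj2 (proj2 (proj2 HT)) _ Hcof) as [h Hh].
  destruct (proj1 (proj2 (proj2 HT))) as [n Hn].
  assert (E : h (n 0) = h (n 1)).
  { apply (eq_sig_hprop (fun _ => proof_irrelevance _)).
    now rewrite (proj2_sig (h (n 0))), (proj2_sig (h (n 1))). }
  discriminate (Hn _ _ (Hh _ _ E)).
Qed.

Lemma sup_of_unbounded_family {I : Type} (f : I -> T) (i0 : I) :
  ~ inj_into T I -> (forall i, exists j, lt (f i) (f j)) ->
  exists g, isLimit T lt g /\ (forall i, lt (f i) g) /\ (forall b, lt b g -> exists i, lt b (f i)).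
Proof.
  intros NI Hunb.
  destruct (regular_bounded f NI) as [B HB].
  destruct (least_element W (fun y => forall i, le T lt (f i) y) B HB) as [g [Hub Hleast]].
  assert (Hbelow : forall i, lt (f i) g).
  { intros i. destruct (Hunb i) as [j Hij]. exact (lt_le_trans W _ _ _ Hij (Hub j)). }
  assert (Hcof : forall b, lt b g -> exists i, lt b (f i)).
  { intros b Hb. apply NNPP. intros N.
    assert (Hub_b : forall i, le T lt (f i) b).
    { intros i. apply (not_lt_le W). intros Hbi. apply N; eauto. }
    exact (le_not_lt W _ _ (Hleast b Hub_b) Hb). }
  exists g. split; [|split; assumption].
  split; [exists (f i0); apply Hbelow|].
  intros b Hb. destruct (Hcof b Hb) as [i Hbi]. exists (f i). split; [exact Hbi|apply Hbelow].
Qed.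

Lemma exists_limit : ~ inj_into T nat -> exists w, isLimit T lt w.
Proof.
  intros NI.
  destruct (choice _ no_greatest) as [succ Hsucc].
  destruct (proj1 (proj2 (proj2 HT))) as [n _].
  destruct (sup_of_unbounded_family (fun k => Nat.iter k succ (n 0)) 0 NI) as [w [Hw _]].
  { intros k. exists (S k). apply Hsucc. }
  exists w. exact Hw.
Qed.

End RegularCardinal.

Section Forcing.
Context {L K : Type} {ltL : L -> L -> Prop} {ltK : K -> K -> Prop}.
Context (WL : IsWellOrder L ltL) (WK : IsWellOrder K ltK).

Local Notation leL := (le L ltL).
Local Notation leK := (le K ltK).
Local Notation limit := (isLimit L ltL).
Local Notation derived := (inDerived L ltL).

Lemma inDerived_mono (C D : L -> Prop) (a : L) :
  (forall x, C x -> D x) -> derived C a -> derived D a.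
Proof.
  intros HCD [HCa Hcof]. split; [exact (HCD a HCa)|].
  intros b Hb. destruct (Hcof b Hb) as [d [Cd Hd]]. exists d. split; [exact (HCD d Cd)|exact Hd].
Qed.

Lemma inDerived_restrict (C : L -> Prop) (a c : L) :
  derived C a -> ltL a c -> derived (fun x => C x /\ ltL x c) a.
Proof.
  intros [HCa Hcof] Hac. split; [now split|].
  intros b Hb. destruct (Hcof b Hb) as [d [Cd [Hbd Hda]]].
  exists d. split; [split; [exact Cd|exact (lt_trans WL _ _ _ Hda Hac)]|split; assumption].
Qed.

Lemma isClubIn_ext (C D : L -> Prop) (a : L) :
  (forall x, C x <-> D x) -> isClubIn L ltL C a -> isClubIn L ltL D a.
Proof.
  intros HCD [Hbound [Hunb Hclosed]]. split; [|split].
  - intros x Dx. apply Hbound, HCD, Dx.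
  - intros b Hb. destruct (Hunb b Hb) as [d [Cd Hd]]. exists d. split; [apply HCD, Cd|exact Hd].
  - intros d Hda Hd Hcof. apply HCD, Hclosed; [exact Hda|exact Hd|].
    intros b Hb. destruct (Hcof b Hb) as [e [De He]]. exists e. split; [apply HCD, De|exact He].
Qed.

Definition agree_at (q p : Cond L K) (a : L) : Prop :=
  iof q a = iof p a /\
  forall i, leK (iof p a) i -> forall x, clubs q a i x <-> clubs p a i x.

Lemma agree_at_sym (q p : Cond L K) (a : L) : agree_at q p a -> agree_at p q a.
Proof.
  intros [Ei Ec]. split; [now symmetry|].
  intros i Hi x. rewrite Ei in Hi. symmetry. exact (Ec i Hi x).
Qed.

Lemma agree_at_trans (r q p : Cond L K) (a : L) :
  agree_at r q a -> agree_at q p a -> agree_at r p a.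
Proof.
  intros [Ei1 Ec1] [Ei2 Ec2]. split; [congruence|]. intros i Hi x.
  rewrite (Ec1 i ltac:(now rewrite Ei2) x). exact (Ec2 i Hi x).
Qed.

Definition LocalCond (p : Cond L K) (b : L) : Prop :=
  (forall i, leK (iof p b) i -> isClubIn L ltL (clubs p b i) b) /\
  (forall i j, leK (iof p b) i -> ltK i j -> forall x, clubs p b i x -> clubs p b j x) /\
  (forall a, limit a -> ltL a b -> forall i, leK (iof p b) i -> derived (clubs p b i) a ->
     leK (iof p a) i /\ (forall x, (clubs p b i x /\ ltL x a) <-> clubs p a i x)) /\
  (forall a, limit a -> ltL a b -> exists i, leK (iof p b) i /\ derived (clubs p b i) a).

Lemma IsCond_local (p : Cond L K) (b : L) :
  IsCond L K ltL ltK p -> limit b -> leL b (gam p) -> LocalCond p b.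
Proof.
  intros (_ & H2 & H3 & H4 & H5) Hb Hbp. split; [|split; [|split]].
  - exact (H2 b Hb Hbp).
  - exact (H3 b Hb Hbp).
  - intros a Ha Hab. exact (H4 a b Ha Hb Hab Hbp).
  - intros a Ha Hab. exact (H5 a b Ha Hb Hab Hbp).
Qed.

Lemma IsCond_of_local (p : Cond L K) :
  limit (gam p) -> (forall b, limit b -> leL b (gam p) -> LocalCond p b) -> IsCond L K ltL ltK p.
Proof.
  intros Hg Hloc. split; [exact Hg|]. split; [|split; [|split]].
  - intros b Hb Hbp. exact (proj1 (Hloc b Hb Hbp)).
  - intros b Hb Hbp. exact (proj1 (proj2 (Hloc b Hb Hbp))).
  - intros a b Ha Hb Hab Hbp. exact (proj1 (proj2 (proj2 (Hloc b Hb Hbp))) a Ha Hab).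
  - intros a b Ha Hb Hab Hbp. exact (proj2 (proj2 (proj2 (Hloc b Hb Hbp))) a Ha Hab).
Qed.

Lemma LocalCond_agree (q p : Cond L K) (b : L) :
  limit b -> (forall a, limit a -> leL a b -> agree_at q p a) -> LocalCond p b -> LocalCond q b.
Proof.
  intros Hb Hagree (C2 & C3 & C4 & C5).
  destruct (Hagree b Hb (le_refl b)) as [Eb Cb].
  unfold LocalCond. rewrite Eb. split; [|split; [|split]].
  - intros i Hi. apply (isClubIn_ext (clubs p b i)); [|exact (C2 i Hi)].
    intros x. now rewrite (Cb i Hi x).
  - intros i j Hi Hij x Hx. apply Cb; [exact (le_trans WK _ _ _ Hi (lt_le _ _ Hij))|].
    apply (C3 i j Hi Hij), Cb, Hx. exact Hi.
  - intros a Ha Hab i Hi Hd.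
    destruct (Hagree a Ha (lt_le _ _ Hab)) as [Ea Ca].
    destruct (C4 a Ha Hab i Hi) as [Hia Htrace].
    { apply (inDerived_mono _ _ a (fun x => proj1 (Cb i Hi x)) Hd). }
    rewrite Ea. split; [exact Hia|]. intros x.
    now rewrite (Cb i Hi x), (Ca i Hia x).
  - intros a Ha Hab. destruct (C5 a Ha Hab) as [i [Hi Hd]].
    exists i. split; [exact Hi|]. exact (inDerived_mono _ _ a (fun x => proj2 (Cb i Hi x)) Hd).
Qed.

Lemma clubs_mono (p : Cond L K) (b : L) (i j : K) :
  LocalCond p b -> leK (iof p b) j -> leK j i -> forall x, clubs p b j x -> clubs p b i x.
Proof. intros (_ & C3 & _) Hj [Hji| <-] x Hx; [exact (C3 j i Hj Hji x Hx)|exact Hx]. Qed.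

Definition segment_cond (w : L) (k : K) : Cond L K :=
  {| gam := w; iof := fun _ => k; clubs := fun a _ x => ltL x a |}.

Lemma segment_cond_IsCond (w : L) (k : K) : limit w -> IsCond L K ltL ltK (segment_cond w k).
Proof.
  intros Hw. apply IsCond_of_local; [exact Hw|]. intros b Hb _. cbn.
  split; [|split; [|split]].
  - intros i _. split; [|split].
    + intros x Hx. exact Hx.
    + intros c Hc. destruct (proj2 Hb c Hc) as [d Hd]. exists d. split; [exact (proj2 Hd)|exact Hd].
    + intros d Hd _ _. exact Hd.
  - intros i j _ _ x Hx. exact Hx.
  - intros a Ha Hab i Hi _. split; [exact Hi|]. intros x. split.
    + intros [_ Hxa]. exact Hxa.
    + intros Hxa. split; [exact (lt_trans WL _ _ _ Hxa Hab)|exact Hxa].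
  - intros a Ha Hab. exists k. split; [apply le_refl|]. split; [exact Hab|].
    intros c Hc. destruct (proj2 Ha c Hc) as [d [Hcd Hda]].
    exists d. split; [exact (lt_trans WL _ _ _ Hda Hab)|split; assumption].
Qed.

Section DirectedFamily.
Variable S : Cond L K -> Prop.
Hypothesis HS : forall p, S p -> IsCond L K ltL ltK p.
Hypothesis Hdir : forall p1 p2, S p1 -> S p2 ->
  exists r, S r /\ extends L K ltL ltK r p1 /\ extends L K ltL ltK r p2.

Lemma directed_agree (p p' : Cond L K) (a : L) :
  S p -> S p' -> limit a -> leL a (gam p) -> leL a (gam p') -> agree_at p p' a.
Proof.
  intros Sp Sp' Ha Hap Hap'. destruct (Hdir p p' Sp Sp') as [r [_ [[_ Hr] [_ Hr']]]].
  exact (agree_at_trans p r p' a (agree_at_sym r p a (Hr a Ha Hap)) (Hr' a Ha Hap')).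
Qed.

Lemma greatest_lower_bound (pm : Cond L K) :
  S pm -> (forall p, S p -> leL (gam p) (gam pm)) -> forall p, S p -> extends L K ltL ltK pm p.
Proof.
  intros Spm Hmax p Sp. split; [exact (Hmax p Sp)|].
  intros a Ha Hap. exact (directed_agree pm p a Spm Sp Ha (le_trans WL _ _ _ Hap (Hmax p Sp)) Hap).
Qed.

Lemma LocalCond_gam (p : Cond L K) : S p -> LocalCond p (gam p).
Proof. intros Sp. exact (IsCond_local p (gam p) (HS p Sp) (proj1 (HS p Sp)) (le_refl _)). Qed.

Lemma exists_uniform_index :
  InfRegCard K ltK -> ~ inj_into K {p | S p} ->
  exists istar,
    (forall p, S p -> leK (iof p (gam p)) istar) /\
    (forall p p', S p -> S p' -> ltL (gam p) (gam p') -> derived (clubs p' (gam p') istar) (gam p)).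
Proof.
  intros HK NKS.
  destruct (choice (fun (uv : {p | S p} * {p | S p}) i =>
      let p := proj1_sig (fst uv) in let p' := proj1_sig (snd uv) in
      ltL (gam p) (gam p') -> leK (iof p' (gam p')) i /\ derived (clubs p' (gam p') i) (gam p)))
    as [wit Hwit].
  { intros [[p Sp] [p' Sp']]. cbn.
    destruct (classic (ltL (gam p) (gam p'))) as [Hlt|Hnlt]; [|exists (iof p' (gam p')); tauto].
    destruct (LocalCond_gam p' Sp') as (_ & _ & _ & C5).
    destruct (C5 (gam p) (proj1 (HS p Sp)) Hlt) as [i Hi]. exists i. now intros. }
  destruct (regular_bounded2 HK (fun u v => wit (u, v)) NKS) as [B1 HB1].
  destruct (regular_bounded HK (fun u : {p | S p} => iof (proj1_sig u) (gam (proj1_sig u))) NKS)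
    as [B2 HB2].
  destruct (exists_upper_bound2 WK B1 B2) as [istar [H1 H2]].
  exists istar. split.
  - intros p Sp. exact (le_trans WK _ _ _ (HB2 (exist _ p Sp)) H2).
  - intros p p' Sp Sp' Hlt.
    destruct (Hwit (exist _ p Sp, exist _ p' Sp') Hlt) as [Hi Hd].
    apply (inDerived_mono _ _ _ (clubs_mono p' (gam p') istar _ (LocalCond_gam p' Sp') Hi
      (le_trans WK _ _ _ (HB1 _ _) H1)) Hd).
Qed.

Section Amalgam.
Variables (g : L) (istar : K).
Hypothesis Hg : limit g.
Hypothesis Hbelow : forall p, S p -> ltL (gam p) g.
Hypothesis Hcofinal : forall b, ltL b g -> exists p, S p /\ ltL b (gam p).
Hypothesis Histar_iof : forall p, S p -> leK (iof p (gam p)) istar.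
Hypothesis Histar_derived : forall p p', S p -> S p' -> ltL (gam p) (gam p') ->
  derived (clubs p' (gam p') istar) (gam p).

Definition pick (a : L) : Cond L K :=
  epsilon (inhabits (segment_cond g istar)) (fun p => S p /\ ltL a (gam p)).

Lemma pick_spec (a : L) : ltL a g -> S (pick a) /\ ltL a (gam (pick a)).
Proof. intros Ha. exact (epsilon_spec _ _ (Hcofinal a Ha)). Qed.

Definition union_club (i : K) (x : L) : Prop := exists p, S p /\ clubs p (gam p) i x.

Definition amalgam : Cond L K := {|
  gam := g;
  iof := fun a => if excluded_middle_informative (a = g) then istar else iof (pick a) a;
  clubs := fun a i x =>
    if excluded_middle_informative (a = g) then union_club i x else clubs (pick a) a i x |}.

Lemma amalgam_top : iof amalgam g = istar /\ clubs amalgam g = union_club.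
Proof. cbn. destruct (excluded_middle_informative (g = g)); [now split|congruence]. Qed.

Lemma amalgam_agree (p : Cond L K) (a : L) :
  S p -> limit a -> ltL a g -> leL a (gam p) -> agree_at amalgam p a.
Proof.
  intros Sp Ha Hag Hap. destruct (pick_spec a Hag) as [Spk Hapk].
  apply (agree_at_trans _ (pick a)); [|exact (directed_agree _ p a Spk Sp Ha (lt_le _ _ Hapk) Hap)].
  unfold agree_at. cbn. destruct (excluded_middle_informative (a = g)) as [->|_].
  - destruct (lt_irrefl WL g Hag).
  - split; [reflexivity|]. now intros.
Qed.

Lemma clubs_gam_trace (p p' : Cond L K) (i : K) (x : L) :
  S p -> S p' -> ltL (gam p) (gam p') -> leK istar i ->
  (clubs p' (gam p') i x /\ ltL x (gam p)) <-> clubs p (gam p) i x.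
Proof.
  intros Sp Sp' Hlt Hi.
  pose proof (LocalCond_gam p' Sp') as Hloc.
  assert (Hi' : leK (iof p' (gam p')) i) by exact (le_trans WK _ _ _ (Histar_iof p' Sp') Hi).
  assert (Hd : derived (clubs p' (gam p') i) (gam p)).
  { exact (inDerived_mono _ _ _ (clubs_mono p' (gam p') i istar Hloc (Histar_iof p' Sp') Hi)
      (Histar_derived p p' Sp Sp' Hlt)). }
  destruct Hloc as (_ & _ & C4 & _).
  destruct (C4 (gam p) (proj1 (HS p Sp)) Hlt i Hi' Hd) as [Hia Htrace].
  destruct (directed_agree p p' (gam p) Sp Sp' (proj1 (HS p Sp)) (le_refl _) (lt_le _ _ Hlt))
    as [_ Hagree].
  rewrite (Htrace x). symmetry. exact (Hagree i Hia x).
Qed.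

Lemma union_club_trace (p : Cond L K) (i : K) (x : L) :
  S p -> leK istar i -> (union_club i x /\ ltL x (gam p)) <-> clubs p (gam p) i x.
Proof.
  intros Sp Hi. split.
  - intros [[p' [Sp' Hx]] Hxp].
    destruct (lt_trichotomy WL (gam p) (gam p')) as [Hlt|[Heq|Hgt]].
    + exact (proj1 (clubs_gam_trace p p' i x Sp Sp' Hlt Hi) (conj Hx Hxp)).
    + destruct (directed_agree p' p (gam p') Sp' Sp (proj1 (HS p' Sp')) (le_refl _)
        ltac:(rewrite Heq; apply le_refl)) as [_ Hagree].
      rewrite Heq. apply Hagree; [|exact Hx].
      rewrite <- Heq. exact (le_trans WK _ _ _ (Histar_iof p Sp) Hi).
    + exact (proj1 (proj2 (clubs_gam_trace p' p i x Sp' Sp Hgt Hi) Hx)).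
  - intros Hx. split; [exists p; now split|].
    destruct (LocalCond_gam p Sp) as [C2 _].
    exact (proj1 (C2 i (le_trans WK _ _ _ (Histar_iof p Sp) Hi)) x Hx).
Qed.

Lemma union_club_isClubIn (i : K) : leK istar i -> isClubIn L ltL (union_club i) g.
Proof.
  intros Hi.
  assert (Hclub : forall p, S p -> isClubIn L ltL (clubs p (gam p) i) (gam p)).
  { intros p Sp. exact (proj1 (LocalCond_gam p Sp) i (le_trans WK _ _ _ (Histar_iof p Sp) Hi)). }
  split; [|split].
  - intros x [p [Sp Hx]]. exact (lt_trans WL _ _ _ (proj1 (Hclub p Sp) x Hx) (Hbelow p Sp)).
  - intros b Hb. destruct (Hcofinal b Hb) as [p [Sp Hbp]].
    destruct (proj1 (proj2 (Hclub p Sp)) b Hbp) as [d [Hd [Hbd Hdp]]].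
    exists d. split; [exists p; now split|].
    split; [exact Hbd|exact (lt_trans WL _ _ _ Hdp (Hbelow p Sp))].
  - intros d Hdg Hd Hcof. destruct (Hcofinal d Hdg) as [p [Sp Hdp]].
    exists p. split; [exact Sp|]. apply (proj2 (proj2 (Hclub p Sp)) d Hdp Hd).
    intros b Hb. destruct (Hcof b Hb) as [e [He [Hbe Hed]]].
    exists e. split; [|split; assumption].
    apply (union_club_trace p i e Sp Hi). split; [exact He|exact (lt_trans WL _ _ _ Hed Hdp)].
Qed.

Lemma LocalCond_amalgam_below (b : L) : limit b -> ltL b g -> LocalCond amalgam b.
Proof.
  intros Hb Hbg. destruct (pick_spec b Hbg) as [Spk Hbpk].
  apply (LocalCond_agree amalgam (pick b) b Hb).
  - intros a Ha Hab.
    apply amalgam_agree; [exact Spk|exact Ha|exact (le_lt_trans WL _ _ _ Hab Hbg)|].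
    exact (le_trans WL _ _ _ Hab (lt_le _ _ Hbpk)).
  - exact (IsCond_local _ b (HS _ Spk) Hb (lt_le _ _ Hbpk)).
Qed.

Lemma LocalCond_amalgam_top : LocalCond amalgam g.
Proof.
  destruct amalgam_top as [Ei Ec]. unfold LocalCond. rewrite Ei, Ec.
  split; [|split; [|split]].
  - exact union_club_isClubIn.
  - intros i j Hi Hij x [p [Sp Hx]]. exists p. split; [exact Sp|].
    exact (clubs_mono p (gam p) j i (LocalCond_gam p Sp) (le_trans WK _ _ _ (Histar_iof p Sp) Hi)
      (lt_le _ _ Hij) x Hx).
  - intros a Ha Hag i Hi Hd. destruct (Hcofinal a Hag) as [p [Sp Hap]].
    assert (Hdp : derived (clubs p (gam p) i) a).
    { apply (inDerived_mono _ _ _ (fun x => proj1 (union_club_trace p i x Sp Hi))).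
      exact (inDerived_restrict _ a (gam p) Hd Hap). }
    destruct (LocalCond_gam p Sp) as (_ & _ & C4 & _).
    destruct (C4 a Ha Hap i (le_trans WK _ _ _ (Histar_iof p Sp) Hi) Hdp) as [Hia Htrace].
    destruct (amalgam_agree p a Sp Ha Hag (lt_le _ _ Hap)) as [Ea Ca].
    rewrite Ea. split; [exact Hia|]. intros x.
    rewrite (Ca i Hia x), <- (Htrace x), <- (union_club_trace p i x Sp Hi).
    split; [|tauto]. intros [Hx Hxa]. split; [|exact Hxa].
    split; [exact Hx|exact (lt_trans WL _ _ _ Hxa Hap)].
  - intros a Ha Hag. destruct (Hcofinal a Hag) as [p [Sp Hap]].
    destruct (LocalCond_gam p Sp) as (_ & _ & _ & C5).
    destruct (C5 a Ha Hap) as [j [Hj Hd]].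
    destruct (exists_upper_bound2 WK j istar) as [i [Hji Hi]].
    exists i. split; [exact Hi|].
    apply (inDerived_mono _ _ _ (fun x Hx => ex_intro _ p (conj Sp
      (clubs_mono p (gam p) i j (LocalCond_gam p Sp) Hj Hji x Hx))) Hd).
Qed.

Lemma amalgam_lower_bound :
  exists q, IsCond L K ltL ltK q /\ forall p, S p -> extends L K ltL ltK q p.
Proof.
  exists amalgam. split.
  - apply IsCond_of_local; [exact Hg|]. intros b Hb [Hbg| ->].
    + exact (LocalCond_amalgam_below b Hb Hbg).
    + exact LocalCond_amalgam_top.
  - intros p Sp. split; [exact (lt_le _ _ (Hbelow p Sp))|].
    intros a Ha Hap. exact (amalgam_agree p a Sp Ha (le_lt_trans WL _ _ _ Hap (Hbelow p Sp)) Hap).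
Qed.

End Amalgam.
End DirectedFamily.
End Forcing.

Theorem mainTheorem18 (K : Type) (ltK : K -> K -> Prop)
    (L : Type) (ltL : L -> L -> Prop) :
  InfRegCard K ltK -> InfRegCard L ltL -> card_lt K L ->
  kappa_directed_closed (Cond L K) (IsCond L K ltL ltK) (extends L K ltL ltK) K.
Proof.
  intros HK HL [_ NLK] S HS Hdir [SK NKS].
  pose proof (proj1 HK) as WK. pose proof (proj1 HL) as WL.
  pose proof (proj1 (proj2 (proj2 HK))) as NK.
  assert (NLS : ~ inj_into L {p | S p}) by (intros H; exact (NLK (inj_into_trans _ _ _ H SK))).
  destruct (classic (exists p, S p)) as [[p0 Sp0]|Hempty].
  2: { destruct (exists_limit HL (fun H => NLK (inj_into_trans _ _ _ H NK))) as [w Hw].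
       destruct NK as [nk _].
       exists (segment_cond (ltL := ltL) w (nk 0)). split; [exact (segment_cond_IsCond WL w _ Hw)|].
       intros p Sp. destruct (Hempty (ex_intro _ p Sp)). }
  destruct (classic (exists pm, S pm /\ forall p, S p -> le L ltL (gam p) (gam pm)))
    as [[pm [Spm Hmax]]|Hnomax].
  { exists pm. split; [exact (HS pm Spm)|exact (greatest_lower_bound WL S Hdir pm Spm Hmax)]. }
  destruct (sup_of_unbounded_family HL (fun u : {p | S p} => gam (proj1_sig u))
      (exist _ p0 Sp0) NLS)
    as (g & Hg & Hbelow & Hcofinal).
  { intros [p Sp]. apply NNPP. intros Hp. apply Hnomax. exists p. split; [exact Sp|].
    intros p' Sp'. apply (not_lt_le WL). intros Hlt. apply Hp. now exists (exist _ p' Sp'). }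
  destruct (exists_uniform_index WK S HS HK NKS) as (istar & Hiof & Hderived).
  apply (amalgam_lower_bound WL WK S HS Hdir g istar Hg); [| |exact Hiof|exact Hderived].
  - intros p Sp. exact (Hbelow (exist _ p Sp)).
  - intros b Hb. destruct (Hcofinal b Hb) as [[p Sp] Hbp]. now exists p.
Qed.
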